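(* Let $!\Gamma$ be a finite multiset of ILL formulae each of the form $!\gamma$, and $\varphi$ an ILL formula. If $!\Gamma\Vdash\varphi$ (i.e. $!\Gamma\Vdash^{\varnothing}_{\mathcal{B}}\varphi$ for every base $\mathcal{B}$), then $!\Gamma\Vdash\,!\varphi$.
   Context: Fix a set $\mathbb{A}$ of propositional atoms. ILL formulae: $\phi ::= p\in\mathbb{A} \mid \top \mid 0 \mid 1 \mid \phi\multimap\phi \mid \phi\otimes\phi \mid \phi\,\&\,\phi \mid \phi\oplus\phi \mid\ !\phi$. All multisets are finite; ''$\Gamma,\Delta$'' denotes multiset union. Atomic rules and bases: an atomic sequent is $P\Rightarrow p$ with $P$ a multiset of atoms, $p$ an atom. An atomic box is a multiset of atomic sequents. An atomic rule is a triple $\langle\mathbf{A},\mathbf{S},p\rangle$ with $\mathbf{A}$ a multiset of atomic boxes, $\mathbf{S}$ an atomic box, $p$ an atom. A base is a set of atomic rules. An atom $p$ is persistent in $\mathcal{B}$ if some $\langle\varnothing,\mathbf{S},p\rangle\in\mathcal{B}$ has $\mathbf{S}\neq\varnothing$. Derivability $\vdash_{\mathcal{B}}$: (Ref) $p\vdash_{\mathcal{B}}p$; (App) if $\langle\mathbf{A},\mathbf{S},p\rangle\in\mathcal{B}$ with $\mathbf{A}=\{\mathbf{T}_1,\dots,\mathbf{T}_m\}$, and there are atomic multisets $C_1,\dots,C_n$ ($n\ge m$) and a multiset $D=\{d_{m+1},\dots,d_n\}$ of atoms persistent in $\mathcal{B}$ such that $C_i,Q\vdash_{\mathcal{B}}q$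 for every $i\le m$ and every $Q\Rightarrow q\in\mathbf{T}_i$, $C_j\vdash_{\mathcal{B}}d_j$ for every $m<j\le n$, and $D,U\vdash_{\mathcal{B}}v$ for every $U\Rightarrow v\in\mathbf{S}$, then $C_1,\dots,C_n\vdash_{\mathcal{B}}p$. Support $\Vdash^L_{\mathcal{B}}$ (base $\mathcal{B}$, atomic multiset $L$), by induction on formulae: $\Vdash^L_{\mathcal{B}}p$ iff $L\vdash_{\mathcal{B}}p$; $\Vdash^L_{\mathcal{B}}\varphi\multimap\psi$ iff $\varphi\Vdash^L_{\mathcal{B}}\psi$; $\Vdash^L_{\mathcal{B}}\varphi\otimes\psi$ iff for all $\mathcal{C}\supseteq\mathcal{B}$, atomic $K$, atoms $p$: if $\varphi,\psi\Vdash^K_{\mathcal{C}}p$ then $\Vdash^{L,K}_{\mathcal{C}}p$; $\Vdash^L_{\mathcal{B}}1$ iff for all $\mathcal{C}\supseteq\mathcal{B}$, $K$, $p$: if $\Vdash^K_{\mathcal{C}}p$ then $\Vdash^{L,K}_{\mathcal{C}}p$; $\Vdash^L_{\mathcal{B}}\varphi\&\psi$ iff $\Vdash^L_{\mathcal{B}}\varphi$ and $\Vdash^L_{\mathcal{B}}\psi$; $\Vdash^L_{\mathcal{B}}\varphi\oplus\psi$ iff for all $\mathcal{C}\supseteq\mathcal{B}$, $K$, $p$: if $\varphi\Vdash^K_{\mathcal{C}}p$ and $\psi\Vdash^K_{\mathcal{C}}p$ then $\Vdash^{L,K}_{\mathcal{C}}p$; $\Vdash^L_{\mathcal{B}}0$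 iff $\Vdash^{L,K}_{\mathcal{B}}p$ for all atoms $p$ and atomic $K$; $\Vdash^L_{\mathcal{B}}\top$ always; $\Vdash^L_{\mathcal{B}}!\varphi$ iff for all $\mathcal{C}\supseteq\mathcal{B}$, $K$, $p$: if (for all $\mathcal{D}\supseteq\mathcal{C}$, $\Vdash^{\varnothing}_{\mathcal{D}}\varphi$ implies $\Vdash^K_{\mathcal{D}}p$) then $\Vdash^{L,K}_{\mathcal{C}}p$. For nonempty multisets: $\Vdash^L_{\mathcal{B}}\Gamma,\Delta$ iff $L=K,M$ with $\Vdash^K_{\mathcal{B}}\Gamma$ and $\Vdash^M_{\mathcal{B}}\Delta$. For a nonempty antecedent written $!\Delta,\Theta$, where $!\Delta$ collects the formulae with top-level connective $!$ (with $\Delta$ the formulae under those $!$) and $\Theta$ contains none: $!\Delta,\Theta\Vdash^L_{\mathcal{B}}\varphi$ iff for all $\mathcal{C}\supseteq\mathcal{B}$ and atomic $K$, if $\Vdash^{\varnothing}_{\mathcal{C}}\delta$ for every $\delta\in\Delta$ and $\Vdash^K_{\mathcal{C}}\Theta$ then $\Vdash^{L,K}_{\mathcal{C}}\varphi$ (when $\Theta$ is empty, $K$ is empty). An empty antecedent: $\varnothing\Vdash^L_{\mathcal{B}}\varphi$ means $\Vdash^L_{\mathcal{B}}\varphi$. A sequent $(\Gamma:\varphi)$ is valid, written $\Gamma\Vdash\varphi$, iff $\Gamma\Vdash^{\varnothing}_{\mathcal{B}}\varphi$ for all bases $\mathcal{B}$. *)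

(* Base-extension semantics for ILL (multisets as lists,
   multiset equality as Permutation). *)
From Stdlib Require Import List Permutation.
Import ListNotations.
Set Implicit Arguments.

Section ILL.
Variable atom : Type.

Inductive formula : Type :=
| FAtom : atom -> formula
| FTop : formula
| FZero : formula
| FOne : formula
| FLolli : formula -> formula -> formula
| FTensor : formula -> formula -> formula
| FWith : formula -> formula -> formula
| FPlus : formula -> formula -> formula
| FBang : formula -> formula.

Definition asequent : Type := (list atom * atom)%type.
Definition abox : Type := list asequent.
Definition arule : Type := (list abox * abox * atom)%type.
Definition base : Type := arule -> Prop.

Definition extends (C B : base) : Prop := forall r, B r -> C r.

Definition persistent (B : base) (p : atom) : Prop :=
  exists S : abox, B ([], S, p) /\ S <> [].

Inductive derives (B : base) : list atom -> atom -> Prop :=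
| der_ref : forall p, derives B [p] p
| der_app : forall (As : list abox) (S : abox) (p : atom)
      (Cs : list (list atom)) (Es : list (list atom * atom)) (L : list atom),
    B (As, S, p) ->
    Forall2 (fun (C : list atom) (T : abox) =>
               forall Q q, In (Q, q) T -> derives B (C ++ Q) q) Cs As ->
    Forall (fun Cd : list atom * atom =>
              persistent B (snd Cd) /\ derives B (fst Cd) (snd Cd)) Es ->
    (forall U v, In (U, v) S -> derives B (map snd Es ++ U) v) ->
    Permutation L (concat Cs ++ concat (map fst Es)) ->
    derives B L p.

(** In the clauses that use an antecedent judgment
    (for lolli, tensor, plus), a formula !d of the antecedent contributes
    no atoms and the hypothesis |-^{}_C d, other formulae theta contribute
    a share K_i of the context with |-^{K_i}_C theta. *)
Fixpoint supp (B : base) (L : list atom) (f : formula) {struct f} : Prop :=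
  match f with
  | FAtom p => derives B L p
  | FTop => True
  | FZero => forall (K : list atom) (p : atom), derives B (L ++ K) p
  | FOne => forall C, extends C B -> forall K p,
        derives C K p -> derives C (L ++ K) p
  | FLolli a b => forall C, extends C B -> forall K,
        (match a with
         | FBang d => K = [] /\ supp C [] d
         | _ => supp C K a
         end) -> supp C (L ++ K) b
  | FTensor a b => forall C, extends C B -> forall K p,
        (forall D, extends D C -> forall M,
           (exists M1 M2, Permutation M (M1 ++ M2) /\
              (match a with
               | FBang d => M1 = [] /\ supp D [] d
               | _ => supp D M1 a
               end) /\
              (match b with
               | FBang d => M2 = [] /\ supp D [] d
               | _ => supp D M2 b
               end)) ->
           derives D (K ++ M) p) ->
        derives C (L ++ K) p
  | FWith a b => supp B L a /\ supp B L b
  | FPlus a b => forall C, extends C B -> forall K p,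
        (forall D, extends D C -> forall M,
           (match a with
            | FBang d => M = [] /\ supp D [] d
            | _ => supp D M a
            end) -> derives D (K ++ M) p) ->
        (forall D, extends D C -> forall M,
           (match b with
            | FBang d => M = [] /\ supp D [] d
            | _ => supp D M b
            end) -> derives D (K ++ M) p) ->
        derives C (L ++ K) p
  | FBang a => forall C, extends C B -> forall K p,
        (forall D, extends D C -> supp D [] a -> derives D K p) ->
        derives C (L ++ K) p
  end.

Definition asm (C : base) (K : list atom) (f : formula) : Prop :=
  match f with
  | FBang d => K = [] /\ supp C [] d
  | _ => supp C K f
  end.

Definition ante_supp (B : base) (L : list atom) (G : list formula)
    (f : formula) : Prop :=
  match G with
  | [] => supp B L f
  | _ :: _ => forall C, extends C B -> forall K,
      (exists Ks : list (list atom),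
          Permutation K (concat Ks) /\ Forall2 (asm C) Ks G) ->
      supp C (L ++ K) f
  end.

Definition valid (G : list formula) (f : formula) : Prop :=
  forall B : base, ante_supp B [] G f.

End ILL.

(* Assumptions of the form !γ consume no atoms, so a context made only of
   them is supported exactly when it is supported with the empty multiset of
   atoms.  Promotion then holds base by base: support is monotone under base
   extension, so if ||-^∅_B φ then ||-^∅_C φ for every C ⊇ B, and this is all
   that the clause for ||-^∅_B !φ asks for. *)
From Stdlib Require Import List Permutation.
Import ListNotations.
Set Implicit Arguments.

Section Monotonicity.
Variable atom : Type.
Implicit Types (A B C : base atom) (L : list atom) (f : formula atom).

Lemma extends_refl B : extends B B.
Proof. unfold extends; auto. Qed.

Lemma extends_trans A B C : extends B A -> extends C B -> extends C A.
Proof. unfold extends; auto. Qed.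

Lemma persistent_mono B C p : extends C B -> persistent B p -> persistent C p.
Proof. intros HBC [S [HS Hne]]; exists S; auto. Qed.

Fixpoint derives_mono B C (HBC : extends C B) L p (H : derives B L p) {struct H} :
  derives C L p.
Proof.
  destruct H as [q | As S q Cs Es L Hr HCs HEs HS HL].
  - apply der_ref.
  - apply (@der_app _ C As S q Cs Es L (HBC _ Hr)).
    + clear Hr HEs HS HL.
      induction HCs as [|M T Cs As HT _ IHCs]; constructor; auto.
      intros Q r Hin; exact (derives_mono B C HBC _ _ (HT Q r Hin)).
    + clear HS HL.
      induction HEs as [|[M d] Es [Hp Hd] _ IHEs]; constructor; auto.
      split; [exact (persistent_mono HBC Hp) | exact (derives_mono B C HBC _ _ Hd)].
    + intros U v Hin; exact (derives_mono B C HBC _ _ (HS U v Hin)).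
    + exact HL.
Qed.

Lemma supp_mono f B C L : extends C B -> supp B L f -> supp C L f.
Proof.
  revert B C L; induction f; simpl; intros B C L HBC H;
    try (intros D HCD; apply H; exact (extends_trans HBC HCD)).
  - exact (derives_mono HBC H).
  - exact I.
  - intros K p; exact (derives_mono HBC (H K p)).
  - destruct H; split; eauto.
Qed.

End Monotonicity.

Section Promotion.
Variable atom : Type.
Implicit Types (B C : base atom) (f : formula atom) (G : list (formula atom)).

Lemma supp_bang_intro B f : supp B [] f -> supp B [] (FBang f).
Proof.
  intros Hf C HBC K p Hder.
  exact (Hder C (extends_refl C) (supp_mono f [] HBC Hf)).
Qed.

Lemma asm_bang_nil G C (Ks : list (list atom)) :
  Forall2 (asm C) Ks (map (@FBang atom) G) -> concat Ks = [].
Proof.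
  revert Ks; induction G as [|g G IHG]; intros Ks HKs.
  - inversion HKs; reflexivity.
  - inversion HKs as [|k g' Ks' G' Hk HKs']; subst.
    destruct Hk as [-> _]; simpl; auto.
Qed.

Lemma ante_supp_bang_intro B G f :
  ante_supp B [] (map (@FBang atom) G) f ->
  ante_supp B [] (map (@FBang atom) G) (FBang f).
Proof.
  destruct G as [|g G]; simpl; [apply supp_bang_intro |].
  intros Hf C HBC K [Ks [HK HKs]].
  pose proof (asm_bang_nil (g :: G) HKs) as Hnil.
  rewrite Hnil in HK; apply Permutation_sym, Permutation_nil in HK; subst K.
  apply supp_bang_intro, (Hf C HBC []).
  exists Ks; rewrite Hnil; auto.
Qed.

End Promotion.

Theorem corollary2 (atom : Type) (Gamma : list (formula atom)) (phi : formula atom) :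
  valid (map (@FBang atom) Gamma) phi ->
  valid (map (@FBang atom) Gamma) (FBang phi).
Proof.
  intros Hvalid B.
  apply ante_supp_bang_intro, Hvalid.
Qed.
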